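(* Let $G$ be a group, $S$ a nonempty multiset of elements of $G$, and $\Gamma=\Phi(G,S)$. Then each connected component of $\Gamma$ is isomorphic to $\Phi(\langle S\rangle,S)$, and the set of connected components of $\Gamma$ is in one-to-one correspondence with the set of right cosets of $\langle S\rangle$ in $G$.
   Context: $\langle S\rangle$ is the subgroup generated by the elements of $S$. For a group $G$ and a multiset $S$ of elements of $G$, $\Phi(G,S)$ is the multigraph (parallel edges allowed, edges labeled by elements of $G$) whose vertex set is the union over the members $s$ of $S$ (with multiplicity, a repeated element giving a separate copy of its cosets per occurrence) of $V_s=\{\langle s\rangle x: x\in G\}$ (right cosets), with, for $\langle s\rangle x\in V_s$, $\langle t\rangle y\in V_t$, $s,t$ distinct members of $S$, one edge labeled $g$ between them for each $g\in\langle s\rangle x\cap\langle t\rangle y$, and no other edges. Isomorphism means isomorphism of multigraphs (bijections on vertices and edges compatible with incidence). *)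

From Stdlib Require Import ProofIrrelevance Relation_Operators.
From mathcomp Require Import ssreflect ssrfun ssrbool.

Set Implicit Arguments.
Unset Strict Implicit.
Unset Printing Implicit Defensive.

Record group := Group {
  gcar :> Type;
  gmul : gcar -> gcar -> gcar;
  gone : gcar;
  ginv : gcar -> gcar;
  gmulA : forall x y z, gmul x (gmul y z) = gmul (gmul x y) z;
  gmul1g : forall x, gmul gone x = x;
  gmulVg : forall x, gmul (ginv x) x = gone }.

Definition is_subgroup (G : group) (H : G -> Prop) : Prop :=
  [/\ H (gone G), (forall x y, H x -> H y -> H (gmul x y)) & (forall x, H x -> H (ginv x))].

Definition gen (G : group) (A : G -> Prop) : G -> Prop :=
  fun x => forall H : G -> Prop, is_subgroup H -> (forall a, A a -> H a) -> H x.

Definition rcoset (G : group) (H : G -> Prop) (x : G) : G -> Prop :=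
  fun g => exists h, H h /\ g = gmul h x.

Definition is_rcoset (G : group) (H : G -> Prop) (C : G -> Prop) : Prop :=
  exists x, C = rcoset H x.

(* the set of elements of a family (the support of the multiset) *)
Definition frange (G : group) (I : Type) (s : I -> G) : G -> Prop :=
  fun a => exists i, s i = a.

Section SubGroup.
Variables (G : group) (A : G -> Prop).

Definition sg_car := { x : G | gen A x }.

Lemma gen1 : gen A (gone G).
Proof. by move=> H [h1 _ _] _. Qed.
Lemma genM x y : gen A x -> gen A y -> gen A (gmul x y).
Proof. move=> hx hy H hH hA; case: (hH) => _ hM _; exact: hM (hx H hH hA) (hy H hH hA). Qed.
Lemma genV x : gen A x -> gen A (ginv x).
Proof. move=> hx H hH hA; case: (hH) => _ _ hV; exact: hV (hx H hH hA). Qed.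

Definition sg_mul (x y : sg_car) : sg_car :=
  exist _ (gmul (proj1_sig x) (proj1_sig y)) (genM (proj2_sig x) (proj2_sig y)).
Definition sg_one : sg_car := exist _ (gone G) gen1.
Definition sg_inv (x : sg_car) : sg_car := exist _ (ginv (proj1_sig x)) (genV (proj2_sig x)).

Lemma sg_eq (x y : sg_car) : proj1_sig x = proj1_sig y -> x = y.
Proof.
case: x => x px; case: y => y py /= exy; subst y.
by rewrite (proof_irrelevance _ px py).
Qed.

Lemma sg_mulA x y z : sg_mul x (sg_mul y z) = sg_mul (sg_mul x y) z.
Proof. apply: sg_eq; exact: gmulA. Qed.
Lemma sg_mul1g x : sg_mul sg_one x = x.
Proof. apply: sg_eq; exact: gmul1g. Qed.
Lemma sg_mulVg x : sg_mul (sg_inv x) x = sg_one.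
Proof. apply: sg_eq; exact: gmulVg. Qed.

Definition sub_group : group := Group sg_mulA sg_mul1g sg_mulVg.
End SubGroup.

(* the multiset S, viewed as a multiset of elements of <S> *)
Definition sub_fam (G : group) (I : Type) (s : I -> G) : I -> sub_group (frange s) :=
  fun i => exist (gen (frange s)) (s i) (fun H _ hA => hA (s i) (ex_intro _ i erefl)).

Record multigraph := MG { mV : Type; mE : Type; minc : mE -> mV -> Prop }.

Definition mg_iso (A B : multigraph) : Prop :=
  exists (fV : mV A -> mV B) (fE : mE A -> mE B),
    [/\ bijective fV, bijective fE & forall e v, minc e v <-> minc (fE e) (fV v)].

Definition mg_adj (A : multigraph) (u v : mV A) : Prop :=
  exists e, minc e u /\ minc e v.

Definition mg_conn (A : multigraph) : mV A -> mV A -> Prop :=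
  clos_refl_trans (mV A) (@mg_adj A).

Definition is_component (A : multigraph) (K : mV A -> Prop) : Prop :=
  exists v, K = mg_conn v.

Definition comp_graph (A : multigraph) (K : mV A -> Prop) : multigraph :=
  @MG { v : mV A | K v } { e : mE A | exists v, K v /\ minc e v }
      (fun e v => minc (proj1_sig e) (proj1_sig v)).

Section Phi.
Variables (G : group) (I : Type) (s : I -> G).

Definition cyc (a : G) : G -> Prop := gen (fun b => b = a).

(* vertices: pairs (member i of S, right coset of <s_i>) -- disjoint union of the V_{s_i} *)
Definition PhiV := { p : I * (G -> Prop) | is_rcoset (cyc (s p.1)) p.2 }.

Definition pv_mem (u : PhiV) : I := (proj1_sig u).1.
Definition pv_set (u : PhiV) : G -> Prop := (proj1_sig u).2.

(* edges: an unordered pair {u, v} of vertices belonging to distinct members of S,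
   together with a label g in the intersection of the two cosets *)
Definition PhiE := { q : (PhiV -> Prop) * G |
  exists u v : PhiV, [/\ pv_mem u <> pv_mem v,
                         q.1 = (fun w => w = u \/ w = v),
                         pv_set u q.2 & pv_set v q.2] }.

Definition edge_label (e : PhiE) : G := (proj1_sig e).2.

Definition PhiInc (e : PhiE) (w : PhiV) : Prop := (proj1_sig e).1 w.

Definition Phi : multigraph := @MG PhiV PhiE PhiInc.
End Phi.

From Stdlib Require Import ProofIrrelevance Relation_Operators.
From Stdlib Require Import FunctionalExtensionality PropExtensionality Classical.
From mathcomp Require Import ssreflect ssrfun ssrbool.

Set Implicit Arguments.
Unset Strict Implicit.
Unset Printing Implicit Defensive.

(* Write H = <S>.  Two vertices (i, <s_i> y) and (j, <s_j> y) with i <> j are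
   joined by the edge labelled y, and <s_j> y = <s_j> (s_j y); chaining these
   moves connects (i, <s_i> y) to (i, <s_i> h y) for every h in H.  Conversely an
   edge labelled g only joins vertices whose cosets contain g, so a coset cannot
   leave H x along a path.  Hence the component of (i, <s_i> x) consists exactly
   of the vertices whose coset lies in H x, which gives the bijection between
   components and H\G, and right translation by x^-1 maps this component
   isomorphically onto Phi(H, S). *)

Lemma sig_eq (T : Type) (P : T -> Prop) (a b : {x | P x}) :
  proj1_sig a = proj1_sig b -> a = b.
Proof. case: a => a pa; case: b => b pb /= e; subst; f_equal; exact: proof_irrelevance. Qed.

Lemma pred_ext (T : Type) (P Q : T -> Prop) : (forall x, P x <-> Q x) -> P = Q.
Proof. by move=> h; apply: functional_extensionality => x; apply: propositional_extensionality. Qed.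

Section GroupTheory.
Variable G : group.
Implicit Types x y z : G.

Lemma mulgV x : gmul x (ginv x) = gone G.
Proof.
have e : gmul (gmul x (ginv x)) (gmul x (ginv x)) = gmul x (ginv x).
  by rewrite -gmulA (gmulA (ginv x)) gmulVg gmul1g.
by rewrite -[LHS]gmul1g -(gmulVg (gmul x (ginv x))) -gmulA e.
Qed.

Lemma mulg1 x : gmul x (gone G) = x.
Proof. by rewrite -(gmulVg x) gmulA mulgV gmul1g. Qed.

Lemma mulKg x y : gmul (ginv x) (gmul x y) = y.
Proof. by rewrite gmulA gmulVg gmul1g. Qed.

Lemma mulVKg x y : gmul x (gmul (ginv x) y) = y.
Proof. by rewrite gmulA mulgV gmul1g. Qed.

Lemma mulgK x y : gmul (gmul y x) (ginv x) = y.
Proof. by rewrite -gmulA mulgV mulg1. Qed.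

Lemma mulgKV x y : gmul (gmul y (ginv x)) x = y.
Proof. by rewrite -gmulA gmulVg mulg1. Qed.

Lemma invg_uniq x y : gmul x y = gone G -> ginv x = y.
Proof. by move=> e; rewrite -(mulg1 (ginv x)) -e mulKg. Qed.

Lemma invgK x : ginv (ginv x) = x.
Proof. by apply: invg_uniq; rewrite gmulVg. Qed.

Lemma invMg x y : ginv (gmul x y) = gmul (ginv y) (ginv x).
Proof. by apply: invg_uniq; rewrite -gmulA (gmulA y) mulgV gmul1g mulgV. Qed.

Lemma gen_subgroup (A : G -> Prop) : is_subgroup (gen A).
Proof. split; [exact: gen1 | exact: genM | exact: genV]. Qed.

Lemma gen_in (A : G -> Prop) a : A a -> gen A a.
Proof. by move=> ha K _; apply. Qed.

Lemma rcosetP (K : G -> Prop) x z : is_subgroup K -> rcoset K x z <-> K (gmul z (ginv x)).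
Proof.
case=> _ _ _; split; first by case=> h [hh ->]; rewrite mulgK.
by move=> hz; exists (gmul z (ginv x)); rewrite mulgKV.
Qed.

End GroupTheory.

Ltac gsimpl := do 4 rewrite ?invMg ?invgK ?gmul1g ?mulg1 ?gmulVg ?mulgV -?gmulA ?mulKg ?mulVKg.

Section GeneratedSubgroup.
Variables (G : group) (A : G -> Prop).
Notation SG := (sub_group A).

(* For the reverse inclusion, the induction in G carries a membership proof in <A>. *)
Lemma cyc_sub_groupP (b z : SG) : cyc b z <-> cyc (proj1_sig b) (proj1_sig z).
Proof.
split.
  move=> hz; apply: (hz (fun z : SG => cyc (proj1_sig b) (proj1_sig z))) => [|_ ->].
    by split=> [|x y|x]; [exact: gen1 | exact: genM | exact: genV].
  exact: gen_in.
pose K x := exists p : gen A x, cyc b (exist _ x p).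
have hK : is_subgroup K.
  split=> [|x y [px hx] [py hy]|x [px hx]].
  - exists (gen1 (A := A)); exact: (@gen1 SG).
  - exists (genM px py); exact: (@genM SG _ (exist _ x px) (exist _ y py)).
  - exists (genV px); exact: (@genV SG _ (exist _ x px)).
case: z => z pz /= /(_ K hK) [|p hz].
  move=> _ ->; exists (proj2_sig b).
  have -> : exist _ (proj1_sig b) (proj2_sig b) = b by apply: sig_eq.
  exact: gen_in.
by rewrite (proof_irrelevance _ pz p).
Qed.

End GeneratedSubgroup.

Section PhiVertices.
Variables (G : group) (I : Type) (s : I -> G).

Definition vertex (k : I) (g : G) : PhiV s :=
  exist _ (k, rcoset (cyc (s k)) g) (ex_intro _ g erefl).

Lemma vertex_ext (u v : PhiV s) :
  pv_mem u = pv_mem v -> (forall g, pv_set u g <-> pv_set v g) -> u = v.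
Proof.
case: u => [[i C] pu]; case: v => [[j D] pv]; rewrite /pv_mem /pv_set /= => eij h.
by apply: sig_eq; rewrite /= eij (pred_ext h).
Qed.

Lemma pv_set_vertex k g z : pv_set (vertex k g) z <-> cyc (s k) (gmul z (ginv g)).
Proof. exact/rcosetP/gen_subgroup. Qed.

Lemma vertex_self k g : pv_set (vertex k g) g.
Proof. by apply/pv_set_vertex; rewrite mulgV; apply: gen1. Qed.

Lemma vertexP (w : PhiV s) : exists x, w = vertex (pv_mem w) x.
Proof.
case: w => [[i C] hC]; have [x hx] := hC; exists x; apply: vertex_ext => // g.
by change (C g <-> rcoset (cyc (s i)) x g); simpl in hx; rewrite hx.
Qed.

Lemma vertex_rcoset k g g' : cyc (s k) (gmul g (ginv g')) -> vertex k g = vertex k g'.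
Proof.
move=> h; apply: vertex_ext => // z; rewrite !pv_set_vertex.
have [_ hM hV] := gen_subgroup (fun b => b = s k).
by split=> hz; [move: (hM _ _ hz h) | move: (hM _ _ hz (hV _ h))]; gsimpl.
Qed.

Lemma pv_set_cyc (w : PhiV s) a b :
  pv_set w a -> pv_set w b -> cyc (s (pv_mem w)) (gmul a (ginv b)).
Proof.
have [y ->] := vertexP w; rewrite !pv_set_vertex => ha hb.
have [_ hM hV] := gen_subgroup (fun c => c = s (pv_mem w)).
by move: (hM _ _ ha (hV _ hb)); gsimpl.
Qed.

(* [PhiE s] is convertible to [{q | phi_edge q}]. *)
Definition phi_edge (q : (PhiV s -> Prop) * G) : Prop :=
  exists u v : PhiV s, [/\ pv_mem u <> pv_mem v, q.1 = (fun w => w = u \/ w = v),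
                           pv_set u q.2 & pv_set v q.2].

Lemma phi_edgeI (P : PhiV s -> Prop) g u v :
  pv_mem u <> pv_mem v -> (forall w, P w <-> w = u \/ w = v) ->
  pv_set u g -> pv_set v g -> phi_edge (P, g).
Proof. by move=> huv /pred_ext hP hu hv; exists u, v. Qed.

Lemma phi_edgeP (e : PhiE s) : exists u v : PhiV s,
  [/\ pv_mem u <> pv_mem v, forall w, PhiInc e w <-> w = u \/ w = v,
      pv_set u (edge_label e) & pv_set v (edge_label e)].
Proof.
case: e => [[P g] pe]; have [u [v [huv hP hu hv]]] := pe.
by exists u, v; split=> // w; rewrite /PhiInc /=; simpl in hP; rewrite hP.
Qed.

Lemma edge_label_inc (e : PhiE s) w : PhiInc e w -> pv_set w (edge_label e).
Proof. by have [u [v [_ -> hu hv]]] := phi_edgeP e; case=> ->. Qed.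

Lemma adj_common u v g : pv_mem u <> pv_mem v -> pv_set u g -> pv_set v g ->
  mg_adj (A := Phi s) u v.
Proof.
move=> huv hu hv.
have pe := phi_edgeI (P := fun w => w = u \/ w = v) huv (fun w => conj id id) hu hv.
by exists (exist phi_edge _ pe); split; [left | right].
Qed.

End PhiVertices.

Section Components.
Variables (G : group) (I : Type) (s : I -> G).
Notation H := (gen (frange s)).
Notation conn := (mg_conn (A := Phi s)).

Lemma cyc_sub_gen k z : cyc (s k) z -> H z.
Proof. by apply; first exact: gen_subgroup; move=> _ ->; apply: gen_in; exists k. Qed.

Lemma conn_sym u v : conn u v -> conn v u.
Proof.
elim=> [x y [e [h1 h2]] | x | x y z _ h1 _ h2]; first by apply: rt_step; exists e.
  exact: rt_refl.
exact: rt_trans h2 h1.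
Qed.

(* One generator step: (k, <s_k> g) -- (j, <s_j> g) = (j, <s_j> (s_j g)) -- (k, <s_k> (s_j g)). *)
Lemma conn_vertex_mul h k g : H h -> conn (vertex s k g) (vertex s k (gmul h g)).
Proof.
move=> hh; move: g; apply: (hh (fun h => forall g, conn (vertex s k g) (vertex s k (gmul h g)))).
- split=> [g | x y hx hy g | x hx g]; first by rewrite gmul1g; apply: rt_refl.
    by apply: rt_trans (hy g) _; rewrite -gmulA; apply: hx.
  by apply: conn_sym; move: (hx (gmul (ginv x) g)); rewrite mulVKg.
- move=> _ [j <-] g.
  have e : vertex s j g = vertex s j (gmul (s j) g).
    by apply: vertex_rcoset; gsimpl; apply: genV; apply: gen_in.
  case: (classic (k = j)) => [-> | kj]; first by rewrite -e; apply: rt_refl.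
  apply: (rt_trans _ _ _ (vertex s j g)).
    by apply: rt_step; apply: adj_common; [exact: kj | apply: vertex_self..].
  by rewrite e; apply: rt_step; apply: adj_common; [move/esym | apply: vertex_self..].
Qed.

Definition in_Hcoset (x : G) (w : PhiV s) : Prop := exists g, pv_set w g /\ H (gmul g (ginv x)).

Lemma in_HcosetP x w g : in_Hcoset x w -> pv_set w g -> H (gmul g (ginv x)).
Proof.
case=> g' [hg' hH] hg; have [_ hM _] := gen_subgroup (frange s).
by move: (hM _ _ (cyc_sub_gen (pv_set_cyc hg hg')) hH); gsimpl.
Qed.

Lemma in_Hcoset_adj x u w : mg_adj (A := Phi s) u w -> in_Hcoset x u -> in_Hcoset x w.
Proof.
case=> e [hu hw] hx; exists (edge_label e); split; first exact: edge_label_inc.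
exact: in_HcosetP hx (edge_label_inc hu).
Qed.

Lemma conn_vertexE i x : conn (vertex s i x) = in_Hcoset x.
Proof.
apply: pred_ext => w; split.
  have hx : in_Hcoset x (vertex s i x).
    by exists x; split; [apply: vertex_self | rewrite mulgV; apply: gen1].
  move=> hc; elim: hc hx => [a b hab | a | a b c _ h1 _ h2] //.
  - exact: in_Hcoset_adj.
  - by move/h1/h2.
move=> hw; have [y ew] := vertexP w.
have hy : H (gmul y (ginv x)) by apply: in_HcosetP hw _; rewrite ew; apply: vertex_self.
apply: rt_trans (conn_vertex_mul i x hy) _; rewrite mulgKV ew.
case: (classic (i = pv_mem w)) => [<- | iw]; first exact: rt_refl.
by apply: rt_step; apply: adj_common; [exact: iw | apply: vertex_self..].
Qed.

Lemma componentP K : is_component (A := Phi s) K -> exists x, K = in_Hcoset x.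
Proof. by case=> v ->; have [x ->] := vertexP v; exists x; apply: conn_vertexE. Qed.

Definition comp_support (K : PhiV s -> Prop) : G -> Prop :=
  fun g => exists w, K w /\ pv_set w g.

Definition coset_vertices (C : G -> Prop) : PhiV s -> Prop :=
  fun w => exists g, pv_set w g /\ C g.

Lemma comp_support_Hcoset (i : I) x : comp_support (in_Hcoset x) = rcoset H x.
Proof.
apply: pred_ext => g; rewrite rcosetP; last exact: gen_subgroup.
split; first by case=> w [hw hg]; apply: in_HcosetP hw hg.
move=> hg; exists (vertex s i g); split; last exact: vertex_self.
by exists g; split; first exact: vertex_self.
Qed.

Lemma coset_vertices_rcoset x : coset_vertices (rcoset H x) = in_Hcoset x.
Proof.
have hH := gen_subgroup (frange s).
by apply: pred_ext => w; split; case=> g [hw /(rcosetP _ _ hH) hg]; exists g.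
Qed.

Lemma components_rcosets_bij (i : I) :
  exists f : { K : mV (Phi s) -> Prop | is_component K } -> { C : G -> Prop | is_rcoset H C },
    bijective f.
Proof.
have supp_rcoset K : is_component (A := Phi s) K -> is_rcoset H (comp_support K).
  by case/componentP=> x ->; exists x; apply: comp_support_Hcoset.
have vertices_comp C : is_rcoset H C -> is_component (A := Phi s) (coset_vertices C).
  by case=> x ->; exists (vertex s i x); rewrite coset_vertices_rcoset conn_vertexE.
exists (fun K => exist _ _ (supp_rcoset _ (proj2_sig K))).
exists (fun C => exist _ _ (vertices_comp _ (proj2_sig C))).
- case=> K hK; apply: sig_eq => /=; have [x ->] := componentP hK.
  by rewrite (comp_support_Hcoset i) coset_vertices_rcoset.
- case=> C hC; apply: sig_eq => /=; have [x ->] := hC.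
  by rewrite coset_vertices_rcoset (comp_support_Hcoset i).
Qed.

End Components.

Section Translation.
Variables (G : group) (I : Type) (s : I -> G) (x0 : G).
Notation H := (gen (frange s)).
Notation HG := (sub_group (frange s)).
Notation s' := (sub_fam s).
Notation comp := (comp_graph (A := Phi s) (in_Hcoset (s := s) x0)).

Definition down_set (w : PhiV s) : HG -> Prop := fun h => pv_set w (gmul (proj1_sig h) x0).

Lemma down_set_rcoset w : in_Hcoset x0 w -> is_rcoset (cyc (s' (pv_mem w))) (down_set w).
Proof.
have [y] := vertexP w; move: (pv_mem w) => j -> hw.
exists (exist _ _ (in_HcosetP hw (vertex_self s j y))); apply: pred_ext => h.
rewrite rcosetP; last exact: gen_subgroup.
by rewrite cyc_sub_groupP /down_set pv_set_vertex /=; gsimpl.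
Qed.

Definition down_vertex w (hw : in_Hcoset x0 w) : PhiV s' :=
  exist _ (pv_mem w, down_set w) (down_set_rcoset hw).

Definition up_set (w' : PhiV s') : G -> Prop :=
  fun g => exists h, pv_set w' h /\ g = gmul (proj1_sig h) x0.

Lemma up_set_rcoset w' : is_rcoset (cyc (s (pv_mem w'))) (up_set w').
Proof.
have [y] := vertexP w'; move: (pv_mem w') => j -> {w'}.
exists (gmul (proj1_sig y) x0); apply: pred_ext => g.
rewrite rcosetP; last exact: gen_subgroup.
split; first by case=> h [+ ->]; rewrite pv_set_vertex cyc_sub_groupP /=; gsimpl.
move=> hg; have [_ hM _] := gen_subgroup (frange s).
have hgH : H (gmul g (ginv x0)) by move: (hM _ _ (cyc_sub_gen hg) (proj2_sig y)); gsimpl.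
exists (exist _ _ hgH); split; last by rewrite /= mulgKV.
by rewrite pv_set_vertex cyc_sub_groupP /=; move: hg; gsimpl.
Qed.

Definition up_vertex (w' : PhiV s') : PhiV s :=
  exist _ (pv_mem w', up_set w') (up_set_rcoset w').

Lemma up_vertex_in w' : in_Hcoset x0 (up_vertex w').
Proof.
have [h hh] : exists h, pv_set w' h by have [y ->] := vertexP w'; exists y; apply: vertex_self.
by exists (gmul (proj1_sig h) x0); split; [exists h | rewrite mulgK; apply: proj2_sig].
Qed.

Lemma down_up w' (p : in_Hcoset x0 (up_vertex w')) : down_vertex p = w'.
Proof.
apply: vertex_ext => //= h; rewrite /down_set /pv_set /=; split; last by exists h.
case=> h' [hh' /(f_equal (fun g => gmul g (ginv x0)))]; rewrite !mulgK => e.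
by rewrite (sig_eq e).
Qed.

Lemma up_down w (p : in_Hcoset x0 w) : up_vertex (down_vertex p) = w.
Proof.
apply: vertex_ext => //= g; rewrite /up_set /pv_set /=; split; first by case=> h [+ ->].
move=> hg; exists (exist _ _ (in_HcosetP p hg)).
by rewrite /pv_set /= /down_set /= mulgKV.
Qed.

Lemma up_vertexE w' w (p : in_Hcoset x0 w) : up_vertex w' = w <-> w' = down_vertex p.
Proof.
split=> [e | ->]; last exact: up_down.
by move: p; rewrite -e => p; rewrite down_up.
Qed.

Lemma up_vertex_inj : injective up_vertex.
Proof. by move=> u v /(up_vertexE _ (up_vertex_in v)) ->; apply: down_up. Qed.

Lemma comp_edge_label (e : mE comp) : H (gmul (edge_label (proj1_sig e)) (ginv x0)).
Proof. by case: e => e [v [hv hev]]; apply: in_HcosetP hv (edge_label_inc hev). Qed.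

Lemma comp_edge_inc (e : mE comp) w : PhiInc (proj1_sig e) w -> in_Hcoset x0 w.
Proof.
move=> hw; exists (edge_label (proj1_sig e)).
by split; [apply: edge_label_inc | apply: comp_edge_label].
Qed.

Definition down_label (e : mE comp) : HG := exist _ _ (comp_edge_label e).

Lemma down_edge_proof (e : mE comp) :
  phi_edge (fun w' => PhiInc (proj1_sig e) (up_vertex w'), down_label e).
Proof.
have [u [v [huv hinc hu hv]]] := phi_edgeP (proj1_sig e).
have pu := comp_edge_inc (proj2 (hinc u) (or_introl erefl)).
have pv := comp_edge_inc (proj2 (hinc v) (or_intror erefl)).
apply: (phi_edgeI (u := down_vertex pu) (v := down_vertex pv)) => // [w'||].
- by rewrite hinc (up_vertexE _ pu) (up_vertexE _ pv).
- by rewrite /pv_set /= /down_set /= mulgKV.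
- by rewrite /pv_set /= /down_set /= mulgKV.
Qed.

Definition down_edge (e : mE comp) : PhiE s' := exist _ _ (down_edge_proof e).

Lemma up_edge_proof (e' : PhiE s') :
  phi_edge (fun w => exists w', PhiInc e' w' /\ w = up_vertex w',
            gmul (proj1_sig (edge_label e')) x0).
Proof.
have [u' [v' [huv hinc hu hv]]] := phi_edgeP e'.
apply: (phi_edgeI (u := up_vertex u') (v := up_vertex v')) => // [w||]; last 2 first.
- by exists (edge_label e').
- by exists (edge_label e').
split; first by case=> w' [/hinc [] -> ->]; [left | right].
by case=> ->; [exists u' | exists v']; rewrite hinc; split; auto.
Qed.

Definition up_edge (e' : PhiE s') : PhiE s := exist _ _ (up_edge_proof e').

Lemma up_edge_in (e' : PhiE s') : exists v, in_Hcoset x0 v /\ PhiInc (up_edge e') v.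
Proof.
have [u' [v' [_ hinc _ _]]] := phi_edgeP e'.
by exists (up_vertex u'); split; [apply: up_vertex_in | exists u'; rewrite hinc; auto].
Qed.

Definition comp_up_vertex (w' : PhiV s') : mV comp := exist _ _ (up_vertex_in w').
Definition comp_up_edge (e' : PhiE s') : mE comp := exist _ _ (up_edge_in e').

Lemma down_up_edge e' : down_edge (comp_up_edge e') = e'.
Proof.
case: e' => [[P h] pe]; apply: sig_eq => /=; congr pair.
  apply: pred_ext => w'; split; last by exists w'.
  by case=> w'' [+ /up_vertex_inj ->].
by apply: sig_eq; apply: mulgK.
Qed.

Lemma up_down_edge (e : mE comp) : up_edge (down_edge e) = proj1_sig e.
Proof.
have hin := @comp_edge_inc e.
case: e hin => [[[P g] pe] he] hin; apply: sig_eq => /=; congr pair; last exact: mulgKV.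
apply: pred_ext => w; split; first by case=> w' [+ ->].
by move=> hw; exists (down_vertex (hin w hw)); rewrite /PhiInc /= up_down.
Qed.

Lemma comp_iso_sub_Phi : mg_iso comp (Phi s').
Proof.
exists (fun w : mV comp => down_vertex (proj2_sig w)), down_edge; split.
- exists comp_up_vertex => [[w p] | w']; last exact: down_up.
  by apply: sig_eq; apply: up_down.
- exists comp_up_edge => [e | e']; last exact: down_up_edge.
  by apply: sig_eq; apply: up_down_edge.
- by move=> e [w p]; rewrite /= /PhiInc /= up_down.
Qed.

End Translation.

Theorem proposition2 (G : group) (I : Type) (s : I -> G) :
  inhabited I ->
  (forall K : mV (Phi s) -> Prop, is_component K ->
     mg_iso (comp_graph K) (Phi (sub_fam s))) /\
  exists f : { K : mV (Phi s) -> Prop | is_component K } ->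
             { C : G -> Prop | is_rcoset (gen (frange s)) C },
    bijective f.
Proof.
case=> i; split; last exact: components_rcosets_bij i.
by move=> K /componentP [x ->]; apply: comp_iso_sub_Phi.
Qed.
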